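(* Let $\mathcal{H}$ be a subcategory of $\mathcal{C}$ that is resolving and specially precovering in $\mathcal{C}$. Then $\mathcal{H}\cap\mathcal{H}^{\perp}$ is an $\mathcal{H}$-injective cogenerator for $\mathcal{H}$.
   Context: $\mathcal{C}=(\mathcal{C},\mathbb{E},\mathfrak{s})$ is an extriangulated category (in the sense of Nakaoka–Palu) with enough projectives and enough injectives; a conflation realizing $\delta\in\mathbb{E}(C,A)$ is written as an $\mathbb{E}$-triangle $A\to B\to C\dashrightarrow$. All subcategories are full, additive, closed under isomorphisms and direct summands. Higher extensions: $\mathbb{E}^1=\mathbb{E}$, $\mathbb{E}^{i+1}(X,Y)=\mathbb{E}(X,\Sigma^iY)\cong\mathbb{E}(\Omega^iX,Y)$. $\mathcal{H}^{\perp}=\{Y:\mathbb{E}^i(H,Y)=0\ \forall i\ge1,\forall H\in\mathcal{H}\}$. $\mathcal{H}$ is resolving if it contains all projective objects and is closed under extensions and CoCones (for every $\mathbb{E}$-triangle $A\to B\to C\dashrightarrow$: $A,C\in\mathcal{H}\Rightarrow B\in\mathcal{H}$; $B,C\in\mathcal{H}\Rightarrow A\in\mathcal{H}$). $\mathcal{H}$ is specially precovering in $\mathcal{C}$ if every $C\in\mathcal{C}$ admits an $\mathbb{E}$-triangle $K\to H\to C\dashrightarrow$ with $H\in\mathcal{H}$ and $\mathbb{E}(\mathcal{H},K)=0$. $\mathcal{W}$ is an $\mathcal{H}$-injective cogenerator for $\mathcal{H}$ if $\mathcal{W}\subseteq\mathcal{H}$, for each $H\in\mathcal{H}$ there is an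 $\mathbb{E}$-triangle $H\to W\to H'\dashrightarrow$ with $W\in\mathcal{W}$, $H'\in\mathcal{H}$, and $\mathbb{E}^i(H,W)=0$ for all $H\in\mathcal{H}$, $W\in\mathcal{W}$, $i\ge1$. *)

From HB Require Import structures.
From mathcomp Require Import all_boot all_algebra.
Set Implicit Arguments. Unset Strict Implicit. Unset Printing Implicit Defensive.
Import GRing.Theory.
Local Open Scope ring_scope.

Record AddCat := {
  Obj : Type;
  Hom : Obj -> Obj -> zmodType;
  comp : forall X Y Z : Obj, Hom Y Z -> Hom X Y -> Hom X Z;
  idm : forall X : Obj, Hom X X;
  compA : forall X Y Z W (h : Hom Z W) (g : Hom Y Z) (f : Hom X Y),
      comp h (comp g f) = comp (comp h g) f;
  comp1m : forall X Y (f : Hom X Y), comp (idm Y) f = f;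
  compm1 : forall X Y (f : Hom X Y), comp f (idm X) = f;
  compDl : forall X Y Z (g1 g2 : Hom Y Z) (f : Hom X Y),
      comp (g1 + g2) f = comp g1 f + comp g2 f;
  compDr : forall X Y Z (g : Hom Y Z) (f1 f2 : Hom X Y),
      comp g (f1 + f2) = comp g f1 + comp g f2;
  zeroO : Obj;
  zeroO_init : forall X (f g : Hom zeroO X), f = g;
  zeroO_term : forall X (f g : Hom X zeroO), f = g;
  bp : Obj -> Obj -> Obj;
  bin1 : forall X Y, Hom X (bp X Y);
  bin2 : forall X Y, Hom Y (bp X Y);
  bpr1 : forall X Y, Hom (bp X Y) X;
  bpr2 : forall X Y, Hom (bp X Y) Y;
  bp11 : forall X Y, comp (bpr1 X Y) (bin1 X Y) = idm X;
  bp22 : forall X Y, comp (bpr2 X Y) (bin2 X Y) = idm Y;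
  bp12 : forall X Y, comp (bpr1 X Y) (bin2 X Y) = 0;
  bp21 : forall X Y, comp (bpr2 X Y) (bin1 X Y) = 0;
  bpsum : forall X Y, comp (bin1 X Y) (bpr1 X Y) + comp (bin2 X Y) (bpr2 X Y)
                      = idm (bp X Y)
}.

Arguments comp {a X Y Z}.
Arguments idm {a}.
Arguments bin1 {a}. Arguments bin2 {a}. Arguments bpr1 {a}. Arguments bpr2 {a}.

Section AddDefs.
Variable C : AddCat.
Definition is_iso (X Y : Obj C) (f : Hom X Y) : Prop :=
  exists g : Hom Y X, comp g f = idm X /\ comp f g = idm Y.
Definition isomorphic (X Y : Obj C) : Prop := exists f : Hom X Y, is_iso f.
Definition hom_bp (X X' Y Y' : Obj C) (f : Hom X Y) (f' : Hom X' Y')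
  : Hom (bp X X') (bp Y Y') :=
  comp (bin1 Y Y') (comp f (bpr1 X X')) + comp (bin2 Y Y') (comp f' (bpr2 X X')).
End AddDefs.

Record Extri := {
  cat :> AddCat;
  (* the biadditive functor E : C^op x C -> Ab, written E C A *)
  Ext : Obj cat -> Obj cat -> zmodType;
  push : forall (Z A A' : Obj cat), Hom A A' -> Ext Z A -> Ext Z A';
  pull : forall (Z' Z A : Obj cat), Hom Z' Z -> Ext Z A -> Ext Z' A;
  pushD : forall Z A A' (a : Hom A A') (d1 d2 : Ext Z A),
      push a (d1 + d2) = push a d1 + push a d2;
  pushDm : forall Z A A' (a1 a2 : Hom A A') (d : Ext Z A),
      push (a1 + a2) d = push a1 d + push a2 d;
  push1 : forall Z A (d : Ext Z A), push (idm A) d = d;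
  pushM : forall Z A A' A'' (a : Hom A A') (b : Hom A' A'') (d : Ext Z A),
      push (comp b a) d = push b (push a d);
  pullD : forall Z' Z A (c : Hom Z' Z) (d1 d2 : Ext Z A),
      pull c (d1 + d2) = pull c d1 + pull c d2;
  pullDm : forall Z' Z A (c1 c2 : Hom Z' Z) (d : Ext Z A),
      pull (c1 + c2) d = pull c1 d + pull c2 d;
  pull1 : forall Z A (d : Ext Z A), pull (idm Z) d = d;
  pullM : forall Z'' Z' Z A (c : Hom Z' Z) (c' : Hom Z'' Z') (d : Ext Z A),
      pull (comp c c') d = pull c' (pull c d);
  push_pull : forall Z' Z A A' (a : Hom A A') (c : Hom Z' Z) (d : Ext Z A),
      push a (pull c d) = pull c (push a d);
  (* the realization s : realizes d x y  means  s(d) = [A -x-> B -y-> Z] *)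
  realizes : forall (Z A : Obj cat), Ext Z A ->
      forall B : Obj cat, Hom A B -> Hom B Z -> Prop;
  real_ex : forall Z A (d : Ext Z A),
      exists B (x : Hom A B) (y : Hom B Z), realizes d x y;
  real_class : forall Z A (d : Ext Z A) B (x : Hom A B) (y : Hom B Z),
      realizes d x y -> forall B' (x' : Hom A B') (y' : Hom B' Z),
      (realizes d x' y' <->
       exists b : Hom B B', is_iso b /\ comp b x = x' /\ comp y' b = y);
  real_morph : forall Z A Z' A' (d : Ext Z A) (d' : Ext Z' A')
      (a : Hom A A') (c : Hom Z Z') B (x : Hom A B) (y : Hom B Z)
      B' (x' : Hom A' B') (y' : Hom B' Z'),
      push a d = pull c d' -> realizes d x y -> realizes d' x' y' ->
      exists b : Hom B B', comp b x = comp x' a /\ comp y' b = comp c y;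
  ET2_zero : forall Z A, realizes (0 : Ext Z A) (bin1 A Z) (bpr2 A Z);
  ET2_sum : forall Z A Z' A' (d : Ext Z A) (d' : Ext Z' A')
      B (x : Hom A B) (y : Hom B Z) B' (x' : Hom A' B') (y' : Hom B' Z'),
      realizes d x y -> realizes d' x' y' ->
      realizes (push (bin1 A A') (pull (bpr1 Z Z') d)
                + push (bin2 A A') (pull (bpr2 Z Z') d'))
               (hom_bp x x') (hom_bp y y');
  ET3 : forall Z A Z' A' (d : Ext Z A) (d' : Ext Z' A')
      B (x : Hom A B) (y : Hom B Z) B' (x' : Hom A' B') (y' : Hom B' Z')
      (a : Hom A A') (b : Hom B B'),
      realizes d x y -> realizes d' x' y' -> comp b x = comp x' a ->
      exists c : Hom Z Z', comp c y = comp y' b /\ push a d = pull c d';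
  ET3op : forall Z A Z' A' (d : Ext Z A) (d' : Ext Z' A')
      B (x : Hom A B) (y : Hom B Z) B' (x' : Hom A' B') (y' : Hom B' Z')
      (b : Hom B B') (c : Hom Z Z'),
      realizes d x y -> realizes d' x' y' -> comp y' b = comp c y ->
      exists a : Hom A A', comp x' a = comp b x /\ push a d = pull c d';
  ET4 : forall (A B D F Cc : Obj cat) (d : Ext D A) (d' : Ext F B)
      (f : Hom A B) (f' : Hom B D) (g : Hom B Cc) (g' : Hom Cc F),
      realizes d f f' -> realizes d' g g' ->
      exists (E : Obj cat) (h : Hom A Cc) (h' : Hom Cc E) (dd : Hom D E)
             (e : Hom E F) (d'' : Ext E A),
        [/\ h = comp g f, comp dd f' = comp h' g, comp e h' = g',
            realizes d'' h h'
          & [/\ realizes (push f' d') dd e,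
                 pull dd d'' = d
               & push f d'' = pull e d']];
  ET4op : forall (A B D F Cc : Obj cat) (d : Ext A D) (d' : Ext B F)
      (f' : Hom D B) (f : Hom B A) (g' : Hom F Cc) (g : Hom Cc B),
      realizes d f' f -> realizes d' g' g ->
      exists (E : Obj cat) (h : Hom Cc A) (h' : Hom E Cc) (dd : Hom E D)
             (e : Hom F E) (d'' : Ext A E),
        [/\ h = comp f g, comp f' dd = comp g h', comp h' e = g',
            realizes d'' h' h
          & [/\ realizes (pull f' d') e dd,
                 push dd d'' = d
               & pull f d'' = push e d']]
}.

Arguments Ext : clear implicits.
Arguments push {e Z A A'}.
Arguments pull {e Z' Z A}.
Arguments realizes {e Z A} _ {B}.

Section ExtriDefs.
Variable C : Extri.

Definition Etriangle (A B Z : Obj C) (x : Hom A B) (y : Hom B Z) : Prop :=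
  exists d : Ext C Z A, realizes d x y.

Definition projective (P : Obj C) : Prop :=
  forall A B Z (x : Hom A B) (y : Hom B Z), Etriangle x y ->
  forall c : Hom P Z, exists b : Hom P B, comp y b = c.
Definition injective (I : Obj C) : Prop :=
  forall A B Z (x : Hom A B) (y : Hom B Z), Etriangle x y ->
  forall a : Hom A I, exists b : Hom B I, comp b x = a.
Definition enough_projectives : Prop :=
  forall Z : Obj C, exists A P (x : Hom A P) (y : Hom P Z),
    projective P /\ Etriangle x y.
Definition enough_injectives : Prop :=
  forall A : Obj C, exists I Z (x : Hom A I) (y : Hom I Z),
    injective I /\ Etriangle x y.

(* syzygy n X K : K is an n-th syzygy  Omega^n X  (via E-triangles K -> P -> Z
   with P projective) *)
Inductive syzygy : nat -> Obj C -> Obj C -> Prop :=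
| syz0 X : syzygy 0 X X
| syzS n X Z K P (x : Hom K P) (y : Hom P Z) :
    syzygy n X Z -> projective P -> Etriangle x y -> syzygy n.+1 X K.

(* E^{n+1}(X,Y) = E(Omega^n X, Y) = 0 *)
Definition ExtS_zero (n : nat) (X Y : Obj C) : Prop :=
  forall K, syzygy n X K -> forall d : Ext C K Y, d = 0.

Definition subcategory (H : Obj C -> Prop) : Prop :=
  [/\ H (zeroO C),
      (forall X Y, H X -> H Y -> H (bp X Y)),
      (forall X Y, isomorphic X Y -> H X -> H Y)
    & (forall X Y, H (bp X Y) -> H X)].

Definition perp (H : Obj C -> Prop) (Y : Obj C) : Prop :=
  forall X, H X -> forall n : nat, ExtS_zero n X Y.

Definition resolving (H : Obj C -> Prop) : Prop :=
  [/\ (forall P, projective P -> H P),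
      (forall A B Z (x : Hom A B) (y : Hom B Z), Etriangle x y ->
          H A -> H Z -> H B)
    & (forall A B Z (x : Hom A B) (y : Hom B Z), Etriangle x y ->
          H B -> H Z -> H A)].

Definition specially_precovering (H : Obj C -> Prop) : Prop :=
  forall Z : Obj C, exists K Hh (x : Hom K Hh) (y : Hom Hh Z),
    [/\ Etriangle x y, H Hh & forall H', H H' -> forall d : Ext C H' K, d = 0].

Definition injective_cogenerator (H W : Obj C -> Prop) : Prop :=
  [/\ (forall X, W X -> H X),
      (forall X, H X -> exists Wo H' (x : Hom X Wo) (y : Hom Wo H'),
          [/\ Etriangle x y, W Wo & H H'])
    & (forall X Y, H X -> W Y -> forall n : nat, ExtS_zero n X Y)].

End ExtriDefs.

(* Given X in H, take an E-triangle X -> I -> Z with I injective and a special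
   H-precover K -> H0 -> Z (so E(H,K) = 0).  Realizing the pull-back class
   K -> N -> I of the precover along I -> Z, a "homotopy pull-back" argument
   (ET4^op, splitting of the resulting triangle, then ET4) produces an
   E-triangle X -> N -> H0' with H0' isomorphic to H0.  Hence N is in H by
   extension closure, and E(H,N) = 0 because N sits between K and the
   injective I.  Since H contains all syzygies of its objects, E(H,N) = 0
   already gives N in H^⊥. *)
From Pilot Require Import Defs.
From mathcomp Require Import all_boot all_algebra.
Import Defs.
Set Implicit Arguments. Unset Strict Implicit. Unset Printing Implicit Defensive.
Import GRing.Theory.
Local Open Scope ring_scope.

(* In an abelian group, an element equal to its double is zero; this is how
   additivity of a map gives preservation of 0. *)
Lemma double_eq0 (V : zmodType) (v : V) : v = v + v -> v = 0.
Proof. by move=> h; have := congr1 (fun w => w - v) h; rewrite subrr addrK. Qed.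

Section AdditiveCategory.
Variable C : AddCat.
Implicit Types X Y Z : Obj C.

Lemma comp0r X Y Z (g : Hom Y Z) : comp g (0 : Hom X Y) = 0.
Proof. by apply: double_eq0; rewrite -compDr addr0. Qed.

Lemma comp0l X Y Z (f : Hom X Y) : comp (0 : Hom Y Z) f = 0.
Proof. by apply: double_eq0; rewrite -compDl addr0. Qed.

Lemma compBr X Y Z (g : Hom Y Z) (f1 f2 : Hom X Y) :
  comp g (f1 - f2) = comp g f1 - comp g f2.
Proof.
apply: (addIr (comp g f2)); rewrite -compDr subrK; by rewrite subrK.
Qed.

Lemma compBl X Y Z (g1 g2 : Hom Y Z) (f : Hom X Y) :
  comp (g1 - g2) f = comp g1 f - comp g2 f.
Proof.
apply: (addIr (comp g2 f)); rewrite -compDl subrK; by rewrite subrK.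
Qed.
End AdditiveCategory.

Section Extriangulated.
Variable C : Extri.
Implicit Types A B X Z : Obj C.

Lemma push0 Z A A' (a : Hom A A') : push a (0 : Ext C Z A) = 0.
Proof. by apply: double_eq0; rewrite -pushD addr0. Qed.

Lemma pull0 Z' Z A (c : Hom Z' Z) : pull c (0 : Ext C Z A) = 0.
Proof. by apply: double_eq0; rewrite -pullD addr0. Qed.

Lemma pull0m Z' Z A (d : Ext C Z A) : pull (0 : Hom Z' Z) d = 0.
Proof. by apply: double_eq0; rewrite -pullDm addr0. Qed.

Lemma pushBm Z A A' (a1 a2 : Hom A A') (d : Ext C Z A) :
  push (a1 - a2) d = push a1 d - push a2 d.
Proof.
apply: (addIr (push a2 d)); rewrite -pushDm subrK; by rewrite subrK.
Qed.

Lemma pullB Z' Z A (c : Hom Z' Z) (d1 d2 : Ext C Z A) :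
  pull c (d1 - d2) = pull c d1 - pull c d2.
Proof.
apply: (addIr (pull c d2)); rewrite -pullD subrK; by rewrite subrK.
Qed.

Section Conflation.
Variables (A B Z : Obj C) (d : Ext C Z A) (x : Hom A B) (y : Hom B Z).
Hypothesis hd : realizes d x y.

Lemma deflation_inflation0 : comp y x = 0.
Proof.
have e : comp (comp x (bpr1 A (zeroO C))) (bin1 A (zeroO C)) = comp x (idm A).
  by rewrite -compA bp11.
have [c [hc _]] := ET3 (ET2_zero (zeroO C) A) hd e.
have := congr1 (fun f => comp f (bin1 A (zeroO C))) hc => /=.
by rewrite -!compA bp21 comp0r bp11 compm1 => <-.
Qed.

Lemma push_inflation0 : push x d = 0.
Proof.
have [c [_ ->]] := ET3 hd (ET2_zero Z B) (erefl (comp (bin1 B Z) x)).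
by rewrite pull0.
Qed.

Lemma lift_deflation W (c : Hom W Z) :
  pull c d = 0 -> exists l : Hom W B, comp y l = c.
Proof.
move=> h0.
have e : push (idm A) (0 : Ext C W A) = pull c d by rewrite push0 h0.
have [b [_ hb]] := real_morph e (ET2_zero W A) hd.
by exists (comp b (bin2 A W)); rewrite compA hb -compA bp22 compm1.
Qed.

Lemma extend_inflation V (z : Hom A V) :
  push z d = 0 -> exists z' : Hom B V, comp z' x = z.
Proof.
move=> h0.
have e : push z d = pull (idm Z) (0 : Ext C Z V) by rewrite h0 pull0.
have [b [hb _]] := real_morph e hd (ET2_zero Z V).
by exists (comp (bpr1 V Z) b); rewrite -compA hb compA bp11 comp1m.
Qed.

Lemma factor_through_inflation W (g : Hom W B) :
  comp y g = 0 -> exists w : Hom W A, comp x w = g.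
Proof.
move=> h0.
have e : comp y (comp g (bpr1 W (zeroO C)))
         = comp (0 : Hom (zeroO C) Z) (bpr2 W (zeroO C)).
  by rewrite compA h0 !comp0l.
have [a [ha _]] := ET3op (ET2_zero (zeroO C) W) hd e.
by exists a; rewrite ha -compA bp11 compm1.
Qed.

Lemma retraction_split (r : Hom B A) : comp r x = idm A -> d = 0.
Proof. by move=> hr; rewrite -(push1 d) -hr pushM push_inflation0 push0. Qed.

Lemma split_complement (r : Hom B A) : comp r x = idm A ->
  exists s : Hom Z B,
    [/\ comp y s = idm Z, comp r s = 0 & comp s y + comp x r = idm B].
Proof.
move=> hrx.
have [s0 hs0] : exists s0 : Hom Z B, comp y s0 = idm Z.
  by apply: lift_deflation; rewrite (retraction_split hrx) pull0.
have hyx := deflation_inflation0.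
set s := s0 - comp x (comp r s0).
have hys : comp y s = idm Z by rewrite compBr compA hyx comp0l subr0.
have hrs : comp r s = 0 by rewrite compBr compA hrx comp1m subrr.
exists s; split=> //.
(* t := 1 - (s y + x r) is killed by y, so t = x w; then w = r t = 0. *)
set t := idm B - (comp s y + comp x r).
have [w hw] : exists w : Hom B A, comp x w = t.
  apply: factor_through_inflation.
  by rewrite /t compBr compDr !compA hys hyx compm1 comp1m comp0l addr0 subrr.
have w0 : w = 0.
  rewrite -(comp1m w) -hrx -compA hw /t compBr compDr !compA hrs hrx.
  by rewrite compm1 comp1m comp0l add0r subrr.
by apply/esym/eqP; rewrite -subr_eq0 -/t -hw w0 comp0r.
Qed.
End Conflation.

Lemma pull_deflation_exact A B Z A' (d : Ext C Z A) (x : Hom A B) (y : Hom B Z)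
    (t : Ext C Z A') :
  realizes d x y -> pull y t = 0 -> exists psi : Hom A A', push psi d = t.
Proof.
move=> hd h0.
have [T [al [be ht]]] := real_ex t.
have [l hl] := lift_deflation ht h0.
have e : comp be l = comp (idm Z) y by rewrite hl comp1m.
have [psi [_ hpsi]] := ET3op hd ht e.
by exists psi; rewrite hpsi pull1.
Qed.

Lemma biproduct_realizes0 A B Z (x : Hom A B) (y : Hom B Z)
    (s : Hom Z B) (r : Hom B A) :
  comp r x = idm A -> comp y s = idm Z -> comp r s = 0 -> comp y x = 0 ->
  comp s y + comp x r = idm B -> realizes (0 : Ext C A Z) s r.
Proof.
move=> hrx hys hrs hyx hsum.
apply/(real_class (ET2_zero A Z)).
exists (comp s (bpr1 Z A) + comp x (bpr2 Z A)); split; last split.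
- exists (comp (bin1 Z A) y + comp (bin2 Z A) r); split.
  + rewrite !compDl !compDr -!compA !(compA y) !(compA r) hys hyx hrs hrx.
    by rewrite !comp1m !comp0l !comp0r addr0 add0r bpsum.
  + rewrite !compDl !compDr -!compA !(compA (bpr1 Z A)) !(compA (bpr2 Z A)).
    by rewrite bp11 bp22 bp12 bp21 !comp1m !comp0l !comp0r addr0 add0r.
- by rewrite compDl -!compA bp11 bp21 compm1 comp0r addr0.
- by rewrite compDr !compA hrs hrx comp0l comp1m add0r.
Qed.

Lemma homotopy_pullback X I Z K N (dl : Ext C Z X) (x : Hom X I) (y : Hom I Z)
    (ep : Ext C Z K) (a : Hom K N) (b : Hom N I) :
  realizes dl x y -> realizes (pull y ep) a b ->
  exists E (u : Hom X N) (v : Hom N E) (k : Hom K E) (p : Hom E Z),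
    Etriangle u v /\ realizes ep k p.
Proof.
move=> hd hab.
have [E [h [h' [dd [e [d'' [_ _ _ hr'' [hed hpush hpull]]]]]]]] :=
  ET4op hd hab.
(* The conflation K -e-> E -dd-> X has class (y x)^* ep = 0, so it splits. *)
have hyx := deflation_inflation0 hd.
rewrite -pullM hyx pull0m in hed.
have [pi [hpi hpid]] : exists pi : Hom E K, comp pi e = idm K /\ push pi d'' = ep.
  have [pi0 hpi0] := extend_inflation hed (z := idm K) (push0 _ _).
  have [psi hpsi] : exists psi : Hom X K, push psi dl = push pi0 d'' - ep.
    apply: (pull_deflation_exact hd).
    by rewrite pullB -push_pull hpull -pushM hpi0 push1 subrr.
  exists (pi0 - comp psi dd); split.
  - by rewrite compBl -compA (deflation_inflation0 hed) comp0r subr0.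
  - by rewrite pushBm pushM hpush hpsi opprB addrC subrK.
have [s [hdds hpis hsum]] := split_complement hed hpi.
have hsplit := biproduct_realizes0 hpi hdds hpis (deflation_inflation0 hed) hsum.
have [E2 [u [v [k [p [d3 [_ _ _ huv [hkp _ _]]]]]]]] := ET4 hsplit hr''.
rewrite hpid in hkp.
by exists E2, u, v, k, p; split; first exists d3.
Qed.
End Extriangulated.

Section Orthogonality.
Variables (C : Extri) (H : Obj C -> Prop).

(* E(H,W) = 0, the first-degree part of membership in H^perp. *)
Definition Ext1_vanishes (W : Obj C) : Prop :=
  forall X, H X -> forall d : Ext C X W, d = 0.

Hypothesis hres : resolving H.

Lemma syzygy_in n X K : syzygy n X K -> H X -> H K.
Proof.
case: hres => hproj _ hcocone s; elim: s => // m X0 Z K0 P x y _ IH hP ht hX.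
exact: hcocone _ _ _ x y ht (hproj _ hP) (IH hX).
Qed.

(* Dimension shifting: E(H,W) = 0 implies E^n(H,W) = 0 for all n >= 1. *)
Lemma perp_of_Ext1_vanishes W : Ext1_vanishes W -> perp H W.
Proof. by move=> hW X hX n K hs d; exact: hW _ (syzygy_in hs hX) d. Qed.

Lemma Ext1_vanishes_middle K N I (ze : Ext C I K) (a : Hom K N) (b : Hom N I) :
  injective I -> H N -> Ext1_vanishes K -> realizes ze a b -> Ext1_vanishes N.
Proof.
case: hres => _ hext _ hI hN hK hab X hX d.
have [B [s [t hst]]] := real_ex d.
have hB : H B := hext _ _ _ s t (ex_intro _ d hst) hN hX.
(* b extends along s to n, which lifts along b to r since E(B,K) = 0. *)
have [n hn] := hI _ _ _ s t (ex_intro _ d hst) b.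
have [r hr] := lift_deflation hab (c := n) (hK _ hB _).
(* r s - 1 factors through a, and that factor extends along s. *)
have [z hz] : exists z : Hom N K, comp a z = comp r s - idm N.
  by apply: (factor_through_inflation hab); rewrite compBr compA hr hn compm1 subrr.
have [z' hz'] := extend_inflation hst (z := z) (hK _ hX _).
apply: (retraction_split hst (r := r - comp a z')).
by rewrite compBl -compA hz' hz opprB addrC subrK.
Qed.
End Orthogonality.

Theorem lemma4p7 (C : Extri) (H : Obj C -> Prop) :
  enough_projectives C -> enough_injectives C ->
  subcategory H -> resolving H -> specially_precovering H ->
  injective_cogenerator H (fun X => H X /\ perp H X).
Proof.
move=> _ hinj [_ _ hiso _] hres hsp; have [_ hext _] := hres.
split=> [X [] // | X hX | X Y hX [_ hY] n]; last exact: hY X hX n.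
have [I [Z [x [y [hI [dl hd]]]]]] := hinj X.
have [K [H0 [k [p [[ep hep] hH0 hK]]]]] := hsp Z.
have [N [a [b hab]]] := real_ex (pull y ep).
have [E [u [v [k' [p' [[d3 huv] hk'p']]]]]] := homotopy_pullback hd hab.
have hE : H E.
  have [i [hi _]] := (real_class hep _ _).1 hk'p'.
  exact: hiso _ _ (ex_intro _ i hi) hH0.
have hN : H N := hext _ _ _ u v (ex_intro _ d3 huv) hX hE.
exists N, E, u, v; split=> //; first by exists d3.
split=> //; apply: (perp_of_Ext1_vanishes hres).
exact: (Ext1_vanishes_middle hres hI hN hK hab).
Qed.
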